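(* Let $m,n,s,k,c$ be positive integers such that $2\leq s\leq n$, $2\leq k\leq m$ and $ms=nk$. Let $\Omega$ be a subset of size $nkc$ of an abelian group $\Gamma$, and set $d=\gcd(s,k)$. If there exists a diagonal $\mathrm{MS}_\Omega(\frac{nk}{d},\frac{nk}{d};d,d;c)$, then there exists an $\mathrm{MS}_\Omega(m,n;s,k;c)$. In particular, if there exists a diagonal $\mathrm{MS}^0_\Omega(\frac{nk}{d},\frac{nk}{d};d,d;c)$, then there exists a $\mathrm{MS}^0_\Omega(m,n;s,k;c)$.
   Context: Let $(\Gamma,+)$ be an abelian group and $\Omega\subseteq\Gamma$ with $|\Omega|>1$. A partially filled array is an array in which some cells may be empty. A magic partially filled array set $\mathrm{MS}_\Omega(m,n;s,k;c)$ is a set of $c$ partially filled $m\times n$ arrays with entries in $\Omega$ such that every element of $\Omega$ appears exactly once in exactly one of the arrays, every array has $s$ filled cells in each row and $k$ in each column, and there exist $x,y\in\Gamma$ such that in every array each row sums to $x$ and each column sums to $y$; it is zero-sum, written $\mathrm{MS}^0_\Omega(m,n;s,k;c)$, if $x=y=0_\Gamma$. For an $N\times N$ partially filled array $A=(a_{i,j})$, the cell $(i,j)$ belongs to the diagonal $D_r$ if $j-i\equiv r\pmod N$; $A$ is $\ell$-diagonal if its nonempty cells are exactly the cells of $\ell$ consecutive diagonals $D_r,D_{r+1},\ldots,D_{r+\ell-1}$ (indices mod $N$). An $\mathrm{MS}_\Omega(N,N;d,d;c)$ is diagonal if every one of its arrays is $d$-diagonal. *)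

From HB Require Import structures.
From mathcomp Require Import all_boot all_order all_algebra.
Set Implicit Arguments. Unset Strict Implicit. Unset Printing Implicit Defensive.
Import GRing.Theory.
Local Open Scope ring_scope.

(* A partially filled m x n array with entries in G: [None] = empty cell. *)
Definition pfarray (G : zmodType) (m n : nat) := 'M[option G]_(m, n).

Definition filled (G : zmodType) (a : option G) : bool := a != None.

Definition row_sum (G : zmodType) m n (A : pfarray G m n) (i : 'I_m) : G :=
  \sum_(j < n) odflt 0 (A i j).
Definition col_sum (G : zmodType) m n (A : pfarray G m n) (j : 'I_n) : G :=
  \sum_(i < m) odflt 0 (A i j).

Definition MS_with (G : zmodType) (Omega : seq G) (m n s k c : nat)
    (A : 'I_c -> pfarray G m n) (x y : G) : Prop :=
  [/\ (forall t i j a, A t i j = Some a -> a \in Omega),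
      (forall a, a \in Omega ->
         #|[set tij : 'I_c * 'I_m * 'I_n | A tij.1.1 tij.1.2 tij.2 == Some a]| = 1%N),
      (forall t i, #|[set j | filled (A t i j)]| = s),
      (forall t j, #|[set i | filled (A t i j)]| = k) &
      (forall t i, row_sum (A t) i = x) /\
      (forall t j, col_sum (A t) j = y)].

Definition is_MS (G : zmodType) (Omega : seq G) (m n s k c : nat)
    (A : 'I_c -> pfarray G m n) : Prop :=
  exists x y, MS_with Omega s k A x y.

Definition is_MS0 (G : zmodType) (Omega : seq G) (m n s k c : nat)
    (A : 'I_c -> pfarray G m n) : Prop :=
  MS_with Omega s k A 0 0.

(* Cell (i,j) of an N x N array lies on diagonal D_r iff j - i = r (mod N). *)
Definition on_diag (N : nat) (i j : 'I_N) (r : nat) : bool :=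
  ((j + N - i) %% N == r %% N)%N.

Definition l_diagonal (G : zmodType) (N l : nat) (A : pfarray G N N) : Prop :=
  exists r : nat, forall i j : 'I_N,
    filled (A i j) = [exists h : 'I_l, on_diag i j (r + h)].

Definition is_diag_MS (G : zmodType) (Omega : seq G) (N d c : nat)
    (A : 'I_c -> pfarray G N N) : Prop :=
  is_MS Omega d d A /\ forall t, l_diagonal d (A t).

Definition is_diag_MS0 (G : zmodType) (Omega : seq G) (N d c : nat)
    (A : 'I_c -> pfarray G N N) : Prop :=
  is_MS0 Omega d d A /\ forall t, l_diagonal d (A t).

(* Write d = gcd(s, k), s = s' d and k = k' d.  Then s' and k' are coprime,
   n = u s' and m = u k' for some u >= d, and N = n k / d = u s' k'.
   Reducing row indices modulo m and column indices modulo n folds each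
   d-diagonal N x N array into an m x n array without collisions: two filled
   cells with the same image lie on diagonals that agree modulo u, hence (as
   d <= u) on the same diagonal, and then their rows agree modulo
   lcm(m, n) = N.  A row of the folded array gathers N / m = s' rows of the
   original one, so it has s' d = s filled cells and sums to s' x; columns
   likewise. *)

From mathcomp Require Import all_boot all_order all_algebra.
Import GRing.Theory.
Set Implicit Arguments. Unset Strict Implicit. Unset Printing Implicit Defensive.

Lemma eq_mod_lcmn (a b x y : nat) :
  x = y %[mod a] -> x = y %[mod b] -> x = y %[mod lcmn a b].
Proof.
wlog le_yx : x y / y <= x => [hwlog exa exb|].
  have [/hwlog-> //|/ltnW/hwlog hyx] := leqP y x.
  exact/esym/(hyx (esym exa) (esym exb)).
move=> /eqP + /eqP; rewrite !eqn_mod_dvd // => da db.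
by apply/eqP; rewrite eqn_mod_dvd // dvdn_lcm da.
Qed.

Lemma lcmn_mul2l_coprime (u s k : nat) :
  coprime s k -> lcmn (u * s) (u * k) = u * s * k.
Proof.
move=> cop; rewrite -muln_lcmr -mulnA; congr (u * _).
by rewrite -[RHS]muln_lcm_gcd (eqP cop) muln1.
Qed.

Lemma on_diag_mod (N r : nat) (i j : 'I_N) : on_diag i j r -> j = i + r %[mod N].
Proof.
move=> /eqP hdiag.
have le_iNj : i <= j + N by rewrite (leq_trans (ltnW (ltn_ord i))) ?leq_addl.
by rewrite -(modnDr j) -(subnK le_iNj) addnC -modnDmr hdiag modnDmr.
Qed.

(* Reducing modulo [u] forces [h = h'], and then the row indices agree modulo
   [lcm (u s) (u k) = u s k]. *)
Lemma diag_cells_eq (u s k r : nat) (i j i' j' : 'I_(u * s * k)) (h h' : nat) :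
  coprime s k -> h < u -> h' < u ->
  on_diag i j (r + h) -> on_diag i' j' (r + h') ->
  i = i' %[mod u * k] -> j = j' %[mod u * s] -> i = i' /\ j = j'.
Proof.
move=> cop lt_hu lt_h'u /on_diag_mod dij /on_diag_mod dij' ii' jj'.
have dvd_u_N : u %| u * s * k by rewrite -mulnA dvdn_mulr.
have dvd_us_N : u * s %| u * s * k by rewrite dvdn_mulr.
have mod_dvd p q x y : p %| q -> x = y %[mod q] -> x = y %[mod p].
  by move=> dvd_pq exy; rewrite -(modn_dvdm x dvd_pq) exy modn_dvdm.
have eq_hh' : h = h'.
  have dvd_u_uk : u %| u * k by rewrite dvdn_mulr.
  have dvd_u_us : u %| u * s by rewrite dvdn_mulr.
  have : i + r + h = i + r + h' %[mod u].
    rewrite -!addnA -(mod_dvd _ _ _ _ dvd_u_N dij) (mod_dvd _ _ _ _ dvd_u_us jj').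
    by rewrite (mod_dvd _ _ _ _ dvd_u_N dij') -modnDml -(mod_dvd _ _ _ _ dvd_u_uk ii') modnDml.
  by move=> /eqP; rewrite eqn_modDl !modn_small // => /eqP.
subst h'.
have eq_ii' : i = i'.
  have : i = i' %[mod lcmn (u * s) (u * k)].
    apply: eq_mod_lcmn ii'; apply/eqP; rewrite -(eqn_modDr (r + h)); apply/eqP.
    by rewrite -(mod_dvd _ _ _ _ dvd_us_N dij) jj' (mod_dvd _ _ _ _ dvd_us_N dij').
  by rewrite lcmn_mul2l_coprime // !modn_small // => /val_inj.
split=> //; subst i'; apply: val_inj.
by move: dij'; rewrite -dij !modn_small.
Qed.

Lemma card_ord_modn (N m q a : nat) :
  a < m -> N = m * q -> #|[pred i : 'I_N | i %% m == a]| = q.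
Proof.
move=> lt_am ->.
have -> : #|[pred i : 'I_(m * q) | i %% m == a]| = \sum_(i < m * q | i %% m == a) 1.
  by rewrite sum1_card.
rewrite -(big_mkord (fun i => i %% m == a) (fun=> 1)) sum1_count /index_iota subn0.
elim: q => [|q IHq]; first by rewrite muln0.
rewrite mulnS addnC iotaD count_cat IHq add0n -[RHS]addn1; congr addn.
rewrite -[m * q]addn0 iotaDl count_map (@eq_in_count _ _ (pred1 a)); last first.
  by move=> i; rewrite mem_iota => /andP[_ lt_im] /=; rewrite mulnC modnMDl modn_small.
by rewrite count_uniq_mem ?iota_uniq // mem_iota lt_am.
Qed.

Section Pushforward.
Variables (G : zmodType) (X Y : finType) (f : X -> Y) (a : X -> option G).

Definition pushf (y : Y) : option G :=
  if [pick x | filled (a x) & f x == y] is Some x then a x else None.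

Lemma pushf_some y v : pushf y = Some v -> exists x, a x = Some v.
Proof. by rewrite /pushf; case: pickP => // x _ <-; exists x. Qed.

Hypothesis f_inj : {in [pred x | filled (a x)] &, injective f}.

Lemma pushf_f x : filled (a x) -> pushf (f x) = a x.
Proof.
move=> ax; rewrite /pushf; case: pickP => [x' /andP[ax' /eqP/f_inj->//]|/(_ x)].
by rewrite ax eqxx.
Qed.

Lemma big_pushf R idx (op : Monoid.com_law idx) (F : option G -> R) (P : pred Y) :
  F None = idx ->
  \big[op/idx]_(y | P y) F (pushf y) = \big[op/idx]_(x | P (f x)) F (a x).
Proof.
move=> F0; pose S := [set x | filled (a x)].
have pushf_out y : y \notin f @: S -> pushf y = None.
  by rewrite /pushf; case: pickP => // x /andP[ax /eqP <-]; rewrite imset_f ?inE.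
rewrite big_mkcond (bigID (mem (f @: S))) /= [X in op _ X]big1 ?Monoid.mulm1; last first.
  by move=> y /pushf_out ->; case: (P y).
rewrite big_imset /=; last by move=> x x'; rewrite !inE; apply: f_inj.
rewrite [RHS]big_mkcond [RHS](bigID (mem S)) /= [X in _ = op _ X]big1 ?Monoid.mulm1.
  by apply: eq_bigr => x; rewrite inE => /pushf_f ->.
by move=> x; rewrite inE /filled negbK => /eqP ->; case: (P (f x)).
Qed.

End Pushforward.

Lemma cards_sum_nat (T : finType) (P : pred T) : #|[set x | P x]| = \sum_x P x.
Proof. by rewrite -sum1_card big_mkcond; apply: eq_bigr => x _; rewrite inE; case: (P x). Qed.

Lemma cards_triple_sum (I J K : finType) (P : I -> J -> K -> bool) :
  #|[set x : I * J * K | P x.1.1 x.1.2 x.2]| = \sum_i \sum_(y : J * K) P i y.1 y.2.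
Proof.
rewrite cards_sum_nat -(pair_bigA _ (fun ij k => P ij.1 ij.2 k : nat)).
rewrite -(pair_bigA _ (fun i j => \sum_k P i j k : nat)).
by apply: eq_bigr => i _; rewrite -(pair_bigA _ (fun j k => P i j k : nat)).
Qed.

Section Fold.
Variables (G : zmodType) (M N m n : nat) (fi : 'I_M -> 'I_m) (fj : 'I_N -> 'I_n).

Definition fold_cell (z : 'I_M * 'I_N) : 'I_m * 'I_n := (fi z.1, fj z.2).

Definition fold_mx (A : pfarray G M N) : pfarray G m n :=
  (\matrix_(i, j) pushf fold_cell (fun z => A z.1 z.2) (i, j))%R.

Section FoldArray.
Variable A : pfarray G M N.
Hypothesis fold_inj : {in [pred z | filled (A z.1 z.2)] &, injective fold_cell}.
Variables (R : Type) (idx : R) (op : Monoid.com_law idx) (F : option G -> R).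
Hypothesis F_None : F None = idx.

Lemma big_fold_mx (P : pred ('I_m * 'I_n)) :
  \big[op/idx]_(y | P y) F (fold_mx A y.1 y.2) =
  \big[op/idx]_(z | P (fold_cell z)) F (A z.1 z.2).
Proof.
rewrite -(big_pushf fold_inj) //; apply: eq_bigr => -[i j] _; by rewrite mxE.
Qed.

Lemma big_row_fold_mx i :
  \big[op/idx]_j F (fold_mx A i j) = \big[op/idx]_(i0 | fi i0 == i) \big[op/idx]_j F (A i0 j).
Proof.
rewrite -(big_pred1_eq op i (fun i' => \big[op/idx]_j F (fold_mx A i' j))).
by rewrite !(pair_big _ xpredT) big_fold_mx.
Qed.

Lemma big_col_fold_mx j :
  \big[op/idx]_i F (fold_mx A i j) = \big[op/idx]_(j0 | fj j0 == j) \big[op/idx]_i F (A i j0).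
Proof.
rewrite -(big_pred1_eq op j (fun j' => \big[op/idx]_i F (fold_mx A i j'))).
by rewrite [LHS]exchange_big [RHS]exchange_big !(pair_big xpredT) big_fold_mx.
Qed.

End FoldArray.

Variables (p q : nat).
Hypothesis card_fiber_row : forall i, #|[pred i0 | fi i0 == i]| = p.
Hypothesis card_fiber_col : forall j, #|[pred j0 | fj j0 == j]| = q.

Lemma MS_with_fold (Omega : seq G) (c s k : nat) (A : 'I_c -> pfarray G M N) (x y : G) :
  (forall t, {in [pred z | filled (A t z.1 z.2)] &, injective fold_cell}) ->
  MS_with Omega s k A x y ->
  MS_with Omega (p * s) (q * k) (fun t => fold_mx (A t)) (x *+ p) (y *+ q).
Proof.
move=> fold_inj [A_Omega A_once A_row A_col [A_row_sum A_col_sum]]; split.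
- by move=> t i j v; rewrite mxE => /pushf_some [z /A_Omega].
- move=> v /A_once <-; rewrite (cards_triple_sum (fun t i j => fold_mx (A t) i j == Some v)).
  rewrite (cards_triple_sum (fun t i j => A t i j == Some v)); apply: eq_bigr => t _.
  exact: (big_fold_mx (fold_inj t) _ (F := fun o => (o == Some v) : nat)).
- move=> t i; rewrite cards_sum_nat.
  rewrite (big_row_fold_mx (fold_inj t) _ (F := fun o => filled o : nat)) //.
  rewrite (eq_bigr (fun=> s)) => [|i0 _]; last by rewrite -(A_row t i0) cards_sum_nat.
  by rewrite sum_nat_const card_fiber_row.
- move=> t j; rewrite cards_sum_nat.
  rewrite (big_col_fold_mx (fold_inj t) _ (F := fun o => filled o : nat)) //.
  rewrite (eq_bigr (fun=> k)) => [|j0 _]; last by rewrite -(A_col t j0) cards_sum_nat.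
  by rewrite sum_nat_const card_fiber_col.
- split=> t i; rewrite /row_sum /col_sum.
  + rewrite (big_row_fold_mx (fold_inj t) _ (F := odflt 0%R)) // (eq_bigr (fun=> x)) => [|i0 _].
      by rewrite sumr_const card_fiber_row.
    exact: A_row_sum.
  + rewrite (big_col_fold_mx (fold_inj t) _ (F := odflt 0%R)) // (eq_bigr (fun=> y)) => [|j0 _].
      by rewrite sumr_const card_fiber_col.
    exact: A_col_sum.
Qed.

End Fold.

Definition ord_mod {m N : nat} (m_gt0 : 0 < m) (i : 'I_N) : 'I_m :=
  Ordinal (ltn_pmod i m_gt0).

Lemma card_fiber_ord_mod (m q N : nat) (m_gt0 : 0 < m) (a : 'I_m) :
  N = m * q -> #|[pred i : 'I_N | ord_mod m_gt0 i == a]| = q.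
Proof.
by move=> eN; rewrite -(card_ord_modn (ltn_ord a) eN); apply: eq_card.
Qed.

Lemma MS_with_fold_diag (G : zmodType) (Omega : seq G) (u s k d c : nat)
    (A : 'I_c -> pfarray G (u * s * k) (u * s * k)) (x y : G) :
  0 < s -> 0 < k -> coprime s k -> 0 < d <= u ->
  MS_with Omega d d A x y -> (forall t, l_diagonal d (A t)) ->
  exists B : 'I_c -> pfarray G (u * k) (u * s),
    MS_with Omega (s * d) (k * d) B (x *+ s) (y *+ k).
Proof.
move=> s_gt0 k_gt0 cop /andP[d_gt0 le_du] A_MS A_diag.
have u_gt0 : 0 < u := leq_trans d_gt0 le_du.
have uk_gt0 : 0 < u * k by rewrite muln_gt0 u_gt0.
have us_gt0 : 0 < u * s by rewrite muln_gt0 u_gt0.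
exists (fun t => fold_mx (ord_mod uk_gt0) (ord_mod us_gt0) (A t)).
apply: MS_with_fold A_MS => [i|j|t].
- by apply: card_fiber_ord_mod; rewrite mulnAC.
- exact: card_fiber_ord_mod.
have [r diag_r] := A_diag t.
move=> [i j] [i' j']; rewrite !inE /= !diag_r => /existsP[h ij_h] /existsP[h' ij_h'].
move=> [eq_i eq_j].
have lt_hu := leq_trans (ltn_ord h) le_du; have lt_h'u := leq_trans (ltn_ord h') le_du.
by have [-> ->] := diag_cells_eq cop lt_hu lt_h'u ij_h ij_h' eq_i eq_j.
Qed.

Lemma gcdn_factorization (m n s k : nat) :
  0 < s -> 0 < k -> s <= n -> m * s = n * k ->
  exists u s' k', [/\ s = s' * gcdn s k, k = k' * gcdn s k, n = u * s', m = u * k'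
                    & [/\ 0 < s', 0 < k', coprime s' k' & gcdn s k <= u]].
Proof.
move=> s_gt0 k_gt0 le_sn ems; set d := gcdn s k.
have d_gt0 : 0 < d by rewrite gcdn_gt0 s_gt0.
have es : s = s %/ d * d by rewrite divnK ?dvdn_gcdl.
have ek : k = k %/ d * d by rewrite divnK ?dvdn_gcdr.
set s' := s %/ d in es *; set k' := k %/ d in ek *.
have cop : coprime s' k'.
  by rewrite /coprime -(eqn_pmul2r d_gt0) mul1n muln_gcdl -es -ek.
have ems' : m * s' = n * k'.
  by apply/eqP; rewrite -(eqn_pmul2r d_gt0) -!mulnA -es -ek ems.
have s'_gt0 : 0 < s' by move: s_gt0; rewrite es muln_gt0 => /andP[].
have k'_gt0 : 0 < k' by move: k_gt0; rewrite ek muln_gt0 => /andP[].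
have en : n = n %/ s' * s'.
  by rewrite divnK // -(Gauss_dvdl n cop) -ems' dvdn_mull.
exists (n %/ s'), s', k'; split=> //.
  by apply/eqP; rewrite -(eqn_pmul2r s'_gt0) ems' {1}en mulnAC.
by split=> //; rewrite -(leq_pmul2r s'_gt0) -en mulnC -es.
Qed.

Theorem mainTheorem3 (G : zmodType) (m n s k c : nat) (Omega : seq G) :
  (0 < m)%N -> (0 < n)%N -> (0 < c)%N ->
  (2 <= s <= n)%N -> (2 <= k <= m)%N -> (m * s = n * k)%N ->
  uniq Omega -> size Omega = (n * k * c)%N ->
  let d := gcdn s k in
  let N := ((n * k) %/ d)%N in
  ((exists A : 'I_c -> pfarray G N N, is_diag_MS Omega d A) ->
     exists B : 'I_c -> pfarray G m n, is_MS Omega s k B)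
  /\
  ((exists A : 'I_c -> pfarray G N N, is_diag_MS0 Omega d A) ->
     exists B : 'I_c -> pfarray G m n, is_MS0 Omega s k B).
Proof.
move=> _ _ _ /andP[le2s le_sn] /andP[le2k _] ems _ _ d N.
have s_gt0 : 0 < s := ltnW le2s.
have k_gt0 : 0 < k := ltnW le2k.
move: (gcdn_factorization s_gt0 k_gt0 le_sn ems); rewrite -/d.
move=> [u [s' [k' [es ek en em [s'_gt0 k'_gt0 cop le_du]]]]].
have d_gt0 : 0 < d by rewrite gcdn_gt0 s_gt0.
have eN : N = u * s' * k' by rewrite /N en ek mulnA mulnK.
have d_bounds : 0 < d <= u by rewrite d_gt0.
clearbody d N; subst N m n s k.
split=> [[A [[x [y A_MS]] A_diag]] | [A [A_MS A_diag]]].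
- have [B B_MS] := MS_with_fold_diag s'_gt0 k'_gt0 cop d_bounds A_MS A_diag.
  by exists B, (x *+ s')%R, (y *+ k')%R.
- have [B B_MS] := MS_with_fold_diag s'_gt0 k'_gt0 cop d_bounds A_MS A_diag.
  by exists B; move: B_MS; rewrite !mul0rn.
Qed.
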